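(* Let $\gamma$ be the Euler–Mascheroni constant and $\zeta$ the Riemann zeta function. Then $$\lim_{x\to\infty}\left\{\zeta\Bigl(\ln\bigl[\ln(\ln\zeta(x)+1)+1\bigr]+1\Bigr)-2^x+\Bigl(\frac43\Bigr)^x-\frac12\right\}=\gamma .$$ *)

From Stdlib Require Import Reals.
From Coquelicot Require Import Coquelicot.
Open Scope R_scope.

(* Riemann zeta function on real s > 1: zeta s = sum_{n>=1} n^(-s).
   (Series returns 0 for divergent series; only s > 1 is used.) *)
Definition zeta (s : R) : R := Series (fun n : nat => / Rpower (INR (n + 1)) s).

Fixpoint harmonic (n : nat) : R :=
  match n with O => 0 | S m => harmonic m + / INR (S m) end.

Definition euler_gamma : R := real (Lim_seq (fun n : nat => harmonic n - ln (INR n))).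

From Stdlib Require Import Reals Lra Psatz.
From Coquelicot Require Import Coquelicot.
Open Scope R_scope.

(* Write [l(x) = ln (ln (ln (zeta x) + 1) + 1)] and split the expression as
   [(zeta (1 + l) - 1/l) + (1/l - 2^x + (4/3)^x - 1/2)].

   The first bracket tends to [gamma] because [l(x) -> 0+] and
   [zeta (1 + h) = 1/h + gamma + O(h)]: comparing [n^(-1-h)] with the integral of
   [y^(-1-h)] over [[n, n+1]] yields monotone sequences with telescoping error bounds,
   uniformly in [h], that tend as [h -> 0] to the sequence [H_n - ln (n+1)] defining [gamma].

   For the second, put [a = 2^-x], [b = 3^-x] and [t = (8/9)^x + 4/(x-1)], so that
   [b <= a t], [b^2 = a^3 (8/9)^x <= a^3 t] and [zeta x = 1 + a + b + a^2 + O(a^2 t)].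
   Three applications of [ln (1 + y) = y - y^2/2 + O(y^3)] give
   [l = a + b - a^2/2 + O(a^2 t)], hence [1/l = 1/a - b/a^2 + 1/2 + O(t)];
   as [2^x = 1/a] and [(4/3)^x = b/a^2], the second bracket is [O(t)]. *)

Lemma ln_le_sub_1 y : 0 < y -> ln y <= y - 1.
Proof. intros Hy; pose proof (exp_ineq1_le (ln y)); rewrite exp_ln in *; lra. Qed.

Lemma ln_succ_sub_bounds m : 0 < m -> / (m + 1) <= ln (m + 1) - ln m <= / m.
Proof.
  intros Hm; split.
  - pose proof (ln_le_sub_1 (m / (m + 1)) ltac:(apply Rdiv_lt_0_compat; lra)) as H.
    rewrite ln_div in H by lra.
    replace (m / (m + 1) - 1) with (- / (m + 1)) in H by (field; lra); lra.
  - pose proof (ln_le_sub_1 ((m + 1) / m) ltac:(apply Rdiv_lt_0_compat; lra)) as H.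
    rewrite ln_div in H by lra.
    replace ((m + 1) / m - 1) with (/ m) in H by (field; lra); lra.
Qed.

Lemma nonneg_of_derive_nonneg (f f' : R -> R) y :
  0 <= y -> f 0 = 0 ->
  (forall z, 0 <= z <= y -> is_derive f z (f' z)) ->
  (forall z, 0 <= z <= y -> 0 <= f' z) -> 0 <= f y.
Proof.
  intros Hy Hf0 Hder Hpos.
  destruct (Req_dec y 0) as [->|Hy0]; [lra|].
  destruct (MVT_cor2 f f' 0 y) as [c [Hc Hcin]]; [lra| |].
  - intros z Hz; apply is_derive_Reals, Hder; exact Hz.
  - pose proof (Hpos c ltac:(lra)). nra.
Qed.

Lemma ln_1p_bounds y : 0 <= y ->
  y - y ^ 2 / 2 <= ln (1 + y) <= y - y ^ 2 / 2 + y ^ 3 / 3.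
Proof.
  intros Hy; split.
  - enough (0 <= ln (1 + y) - (y - y ^ 2 / 2)) by lra.
    apply (nonneg_of_derive_nonneg (fun z => ln (1 + z) - (z - z ^ 2 / 2))
             (fun z => z ^ 2 / (1 + z))); auto.
    + cbv beta; rewrite Rplus_0_r, ln_1; field.
    + intros z Hz; auto_derive; [lra | field; lra].
    + intros z Hz; apply Rdiv_le_0_compat; nra.
  - enough (0 <= y - y ^ 2 / 2 + y ^ 3 / 3 - ln (1 + y)) by lra.
    apply (nonneg_of_derive_nonneg (fun z => z - z ^ 2 / 2 + z ^ 3 / 3 - ln (1 + z))
             (fun z => z ^ 3 / (1 + z))); auto.
    + cbv beta; rewrite Rplus_0_r, ln_1; field.
    + intros z Hz; auto_derive; [lra | field; lra].
    + intros z Hz; apply Rdiv_le_0_compat; [apply pow_le|]; lra.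
Qed.

Lemma exp_neg_bounds y : 0 <= y -> 1 - y <= exp (- y) <= 1 - y + y ^ 2 / 2.
Proof.
  intros Hy; split; [pose proof (exp_ineq1_le (- y)); lra|].
  enough (0 <= 1 - y + y ^ 2 / 2 - exp (- y)) by lra.
  apply (nonneg_of_derive_nonneg (fun z => 1 - z + z ^ 2 / 2 - exp (- z))
             (fun z => z - 1 + exp (- z))); auto.
  - cbv beta; rewrite Ropp_0, exp_0; field.
  - intros z _; auto_derive; [easy | field].
  - intros z _; pose proof (exp_ineq1_le (- z)); lra.
Qed.

Lemma Rpower_inv_sub_bounds m h : 0 < m -> 0 < h ->
  h / Rpower (m + 1) (1 + h) <= / Rpower m h - / Rpower (m + 1) h
  <= h / Rpower m (1 + h).
Proof.
  intros Hm Hh.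
  pose proof (ln_succ_sub_bounds m Hm) as HD.
  set (D := ln (m + 1) - ln m) in HD.
  assert (Hsplit : forall u, 0 < u -> Rpower u (1 + h) = u * Rpower u h).
  { intros u Hu; rewrite Rpower_plus, Rpower_1 by exact Hu; reflexivity. }
  assert (HQ : Rpower (m + 1) h = Rpower m h * exp (h * D)).
  { unfold Rpower, D; rewrite <- exp_plus; f_equal; ring. }
  rewrite !Hsplit, HQ by lra.
  assert (HP : 0 < Rpower m h) by apply exp_pos.
  assert (HE : 0 < exp (h * D)) by apply exp_pos.
  set (P := Rpower m h) in *; set (E := exp (h * D)) in *.
  split.
  - replace (/ P - / (P * E)) with ((m + 1) * (E - 1) * / ((m + 1) * (P * E)))
      by (field; lra).
    apply Rmult_le_compat_r.
    { left; apply Rinv_0_lt_compat; repeat apply Rmult_lt_0_compat; lra. }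
    assert (1 + h * D <= E) by apply exp_ineq1_le.
    assert (h * / (m + 1) <= h * D) by (apply Rmult_le_compat_l; lra).
    replace h with ((m + 1) * (h * / (m + 1))) at 1 by (field; lra).
    apply Rmult_le_compat_l; lra.
  - replace (/ P - / (P * E)) with ((1 - exp (- (h * D))) * / P)
      by (rewrite exp_Ropp; fold E; field; lra).
    replace (h / (m * P)) with (h / m * / P) by (field; lra).
    apply Rmult_le_compat_r; [left; apply Rinv_0_lt_compat; lra|].
    pose proof (exp_ineq1_le (- (h * D))).
    assert (h * D <= h * / m) by (apply Rmult_le_compat_l; lra).
    unfold Rdiv; lra.
Qed.
Lemma inv_sub_inv_Rpower_bounds m h : 1 <= m -> 0 < h ->
  0 <= / m - / Rpower m (1 + h) <= h * ln m.
Proof.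
  intros Hm Hh.
  assert (HL : 0 <= h * ln m) by (apply Rmult_le_pos; [lra | rewrite <- ln_1; apply ln_le; lra]).
  pose proof (exp_neg_bounds (h * ln m) HL) as He.
  rewrite Rpower_plus, Rpower_1 by lra.
  replace (/ m - / (m * Rpower m h)) with (/ m * (1 - exp (- (h * ln m)))).
  2: { unfold Rpower; rewrite exp_Ropp; field; split; [apply Rgt_not_eq, exp_pos | lra]. }
  assert (0 < / m <= 1).
  { split; [apply Rinv_0_lt_compat; lra | rewrite <- Rinv_1; apply Rinv_le_contravar; lra]. }
  assert (exp (- (h * ln m)) <= 1).
  { rewrite exp_Ropp, <- Rinv_1; apply Rinv_le_contravar; [lra|].
    pose proof (exp_ineq1_le (h * ln m)); lra. }
  split; nra.
Qed.

Lemma one_sub_exp_neg_div_bounds h L : 0 < h -> 0 <= L ->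
  L - h * L ^ 2 / 2 <= (1 - exp (- (h * L))) / h <= L.
Proof.
  intros Hh HL; pose proof (exp_neg_bounds (h * L) ltac:(nra)).
  split; [apply Rle_div_r | apply Rle_div_l]; nra.
Qed.

Lemma Rpower_inv_base u z : 0 < u -> Rpower (/ u) z = / Rpower u z.
Proof. intros Hu; unfold Rpower; rewrite ln_Rinv, <- exp_Ropp by exact Hu; f_equal; ring. Qed.

Lemma Rpower_pow_base u z n : 0 < u -> Rpower u z ^ n = Rpower (u ^ n) z.
Proof.
  intros Hu; induction n as [|n IH]; simpl.
  - unfold Rpower; rewrite ln_1, Rmult_0_r, exp_0; reflexivity.
  - rewrite IH; apply Rpower_mult_distr; [exact Hu | apply pow_lt, Hu].
Qed.

Section Telescoping.

Variables a w : nat -> R.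
Hypothesis increment_bounds : forall n, 0 <= a (S n) - a n <= w n - w (S n).
Hypothesis w_nonneg : forall n, 0 <= w n.

Lemma telescoping_gap N k : 0 <= a (N + k) - a N <= w N - w (N + k).
Proof.
  induction k as [|k IH]; [rewrite Nat.add_0_r; lra|].
  rewrite Nat.add_succ_r; pose proof (increment_bounds (N + k)); lra.
Qed.

Lemma ex_finite_lim_seq_telescoping : ex_finite_lim_seq a.
Proof.
  apply ex_finite_lim_seq_incr with (a 0%nat + w 0%nat).
  - intros n; pose proof (increment_bounds n); lra.
  - intros n; pose proof (telescoping_gap 0 n); pose proof (w_nonneg n); simpl in *; lra.
Qed.

Lemma is_lim_seq_telescoping_gap (l : R) N :
  is_lim_seq a l -> 0 <= l - a N <= w N.
Proof.
  intros Hl; apply (is_lim_seq_incr_n _ N) in Hl.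
  assert (Hlow : Rbar_le (a N) l).
  { apply (is_lim_seq_le (fun _ => a N) (fun n => a (n + N)%nat));
      [|apply is_lim_seq_const | exact Hl].
    intros n; rewrite Nat.add_comm; pose proof (telescoping_gap N n); lra. }
  assert (Hup : Rbar_le l (a N + w N)).
  { apply (is_lim_seq_le (fun n => a (n + N)%nat) (fun _ => a N + w N));
      [|exact Hl | apply is_lim_seq_const].
    intros n; rewrite Nat.add_comm.
    pose proof (telescoping_gap N n); pose proof (w_nonneg (N + n)); lra. }
  simpl in Hlow, Hup; lra.
Qed.

End Telescoping.

(** * Partial sums of the zeta series *)

Lemma sum_n_succ (a : nat -> R) n : sum_n a (S n) = sum_n a n + a (S n).
Proof. exact (@sum_Sn R_AbelianMonoid a n). Qed.

Definition zeta_term (s : R) (n : nat) : R := / Rpower (INR n + 1) s.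

Lemma zeta_Series s : zeta s = Series (zeta_term s).
Proof. apply Series_ext; intros n; unfold zeta_term; rewrite plus_INR; reflexivity. Qed.

Lemma zeta_term_pos s n : 0 < zeta_term s n.
Proof. apply Rinv_0_lt_compat, exp_pos. Qed.

Lemma zeta_term_0 s : zeta_term s 0 = 1.
Proof.
  unfold zeta_term, Rpower; simpl.
  rewrite Rplus_0_l, ln_1, Rmult_0_r, exp_0; apply Rinv_1.
Qed.

Lemma zeta_term_sub_bounds h n : 0 < h ->
  h * zeta_term (1 + h) (S n) <= zeta_term h n - zeta_term h (S n)
  <= h * zeta_term (1 + h) n.
Proof.
  intros Hh; unfold zeta_term; rewrite S_INR.
  pose proof (pos_INR n); apply Rpower_inv_sub_bounds; lra.
Qed.

Lemma zeta_partial_sum_increment h n : 0 < h ->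
  0 <= sum_n (zeta_term (1 + h)) (S n) - sum_n (zeta_term (1 + h)) n
  <= zeta_term h n / h - zeta_term h (S n) / h.
Proof.
  intros Hh; rewrite sum_n_succ.
  pose proof (zeta_term_sub_bounds h n Hh); pose proof (zeta_term_pos (1 + h) (S n)).
  replace (zeta_term h n / h - zeta_term h (S n) / h)
    with ((zeta_term h n - zeta_term h (S n)) / h) by (field; lra).
  split; [lra|].
  apply Rle_div_r; lra.
Qed.

Lemma is_lim_seq_zeta_partial_sum h : 0 < h ->
  is_lim_seq (sum_n (zeta_term (1 + h))) (zeta (1 + h)).
Proof.
  intros Hh; rewrite zeta_Series.
  apply Lim_seq_correct', (ex_finite_lim_seq_telescoping _ (fun n => zeta_term h n / h)).
  - intros n; apply zeta_partial_sum_increment, Hh.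
  - intros n; apply Rdiv_le_0_compat; [apply Rlt_le, zeta_term_pos | exact Hh].
Qed.

Lemma zeta_sub_partial_sum_bounds h N : 0 < h ->
  0 <= zeta (1 + h) - sum_n (zeta_term (1 + h)) N <= zeta_term h N / h.
Proof.
  intros Hh; apply (is_lim_seq_telescoping_gap _ (fun n => zeta_term h n / h)).
  - intros n; apply zeta_partial_sum_increment, Hh.
  - intros n; apply Rdiv_le_0_compat; [apply Rlt_le, zeta_term_pos | exact Hh].
  - apply is_lim_seq_zeta_partial_sum, Hh.
Qed.

Lemma zeta_expansion_at_infinity x : 1 < x ->
  0 <= zeta x - (1 + Rpower (/ 2) x + Rpower (/ 3) x + Rpower (/ 2) x ^ 2)
  <= Rpower (/ 2) x ^ 2 * (4 / (x - 1)).
Proof.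
  intros Hx; set (h := x - 1); replace x with (1 + h) by (unfold h; ring).
  assert (Hh : 0 < h) by (unfold h; lra).
  assert (Hsum : sum_n (zeta_term (1 + h)) 3
                 = 1 + Rpower (/ 2) (1 + h) + Rpower (/ 3) (1 + h) + Rpower (/ 2) (1 + h) ^ 2).
  { rewrite Rpower_pow_base by lra; replace ((/ 2) ^ 2) with (/ 4) by field.
    rewrite !Rpower_inv_base by lra.
    rewrite !sum_Sn, sum_O, zeta_term_0; unfold plus, zeta_term; simpl.
    repeat f_equal; ring. }
  assert (Htail : zeta_term h 3 / h = Rpower (/ 2) (1 + h) ^ 2 * (4 / h)).
  { rewrite Rpower_pow_base by lra; replace ((/ 2) ^ 2) with (/ 4) by field.
    rewrite Rpower_inv_base, Rpower_plus, Rpower_1 by lra.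
    unfold zeta_term; simpl; replace (1 + 1 + 1 + 1) with 4 by ring.
    assert (0 < Rpower 4 h) by apply exp_pos; field; lra. }
  rewrite <- Hsum, <- Htail; apply zeta_sub_partial_sum_bounds, Hh.
Qed.

(** * Euler's constant and the pole of zeta at 1 *)

Lemma is_lim_seq_INR_add_1 : is_lim_seq (fun n => INR n + 1) p_infty.
Proof.
  apply (is_lim_seq_ext (fun n => INR (S n))); [intros n; apply S_INR|].
  apply (is_lim_seq_incr_1 INR p_infty), is_lim_seq_INR.
Qed.

Definition harmonic_gap (n : nat) : R := harmonic n - ln (INR n + 1).

Lemma harmonic_gap_increment n :
  0 <= harmonic_gap (S n) - harmonic_gap n <= / (INR n + 1) - / (INR (S n) + 1).
Proof.
  unfold harmonic_gap; change (harmonic (S n)) with (harmonic n + / INR (S n)).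
  rewrite !S_INR.
  pose proof (pos_INR n).
  pose proof (ln_succ_sub_bounds (INR n + 1) ltac:(lra)); lra.
Qed.

Lemma harmonic_gap_telescoping_bound (l : R) N :
  is_lim_seq harmonic_gap l -> 0 <= l - harmonic_gap N <= / (INR N + 1).
Proof.
  apply (is_lim_seq_telescoping_gap _ (fun n => / (INR n + 1))).
  - exact harmonic_gap_increment.
  - intros n; pose proof (pos_INR n); left; apply Rinv_0_lt_compat; lra.
Qed.

Lemma is_lim_seq_harmonic_gap : is_lim_seq harmonic_gap euler_gamma.
Proof.
  assert (Hex : ex_finite_lim_seq harmonic_gap).
  { apply (ex_finite_lim_seq_telescoping _ (fun n => / (INR n + 1))).
    - exact harmonic_gap_increment.
    - intros n; pose proof (pos_INR n); left; apply Rinv_0_lt_compat; lra. }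
  destruct Hex as [l Hl].
  assert (Hshift : is_lim_seq (fun n => harmonic n - ln (INR n)) l).
  { apply is_lim_seq_incr_1.
    apply (is_lim_seq_ext (fun n => harmonic_gap n + / (INR n + 1))).
    { intros n; unfold harmonic_gap; change (harmonic (S n)) with (harmonic n + / INR (S n)).
      rewrite S_INR; ring. }
    replace (Finite l) with (Rbar_plus l (Rbar_inv p_infty))
      by (simpl; f_equal; rewrite Rplus_0_r; reflexivity).
    apply is_lim_seq_plus'; [exact Hl|].
    apply (is_lim_seq_inv _ p_infty is_lim_seq_INR_add_1); discriminate. }
  unfold euler_gamma; rewrite (is_lim_seq_unique _ _ Hshift); exact Hl.
Qed.

Lemma zeta_term_le_inv s n : 1 <= s -> zeta_term s n <= / (INR n + 1).
Proof.
  intros Hs; pose proof (pos_INR n); unfold zeta_term.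
  apply Rinv_le_contravar; [lra|].
  rewrite <- (Rpower_1 (INR n + 1)) at 1 by lra.
  apply Rle_Rpower; lra.
Qed.

Lemma is_lim_seq_zeta_term h : 0 < h -> is_lim_seq (zeta_term h) 0.
Proof.
  intros Hh; replace (Finite 0) with (Rbar_inv p_infty) by reflexivity.
  apply is_lim_seq_inv; [|discriminate].
  apply (is_lim_comp_seq exp (fun n => h * ln (INR n + 1)) p_infty);
    [apply is_lim_exp_p | exists O; easy |].
  apply (is_lim_seq_mult (fun _ => h) _ h p_infty);
    [apply is_lim_seq_const | |apply is_Rbar_mult_sym, is_Rbar_mult_p_infty_pos; simpl; lra].
  apply (is_lim_comp_seq ln _ p_infty p_infty is_lim_ln_p);
    [exists O; easy | exact is_lim_seq_INR_add_1].
Qed.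

(* The partial sum minus the integral of [y^(-1-h)] over [1, N + 2]. *)
Definition zeta_gap (h : R) (N : nat) : R :=
  sum_n (zeta_term (1 + h)) N - (1 - zeta_term h (S N)) / h.

Lemma zeta_gap_increment h N : 0 < h ->
  0 <= zeta_gap h (S N) - zeta_gap h N
  <= zeta_term (1 + h) (S N) - zeta_term (1 + h) (S (S N)).
Proof.
  intros Hh; pose proof (zeta_term_sub_bounds h (S N) Hh) as Hb.
  replace (zeta_gap h (S N) - zeta_gap h N)
    with (zeta_term (1 + h) (S N) - (zeta_term h (S N) - zeta_term h (S (S N))) / h)
    by (unfold zeta_gap; rewrite sum_n_succ; field; lra).
  split.
  - enough ((zeta_term h (S N) - zeta_term h (S (S N))) / h <= zeta_term (1 + h) (S N)) by lra.
    apply Rle_div_l; lra.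
  - enough (zeta_term (1 + h) (S (S N)) <= (zeta_term h (S N) - zeta_term h (S (S N))) / h) by lra.
    apply Rle_div_r; lra.
Qed.

Lemma zeta_sub_inv_sub_zeta_gap h N : 0 < h ->
  0 <= zeta (1 + h) - / h - zeta_gap h N <= / (INR (S N) + 1).
Proof.
  intros Hh.
  assert (Hlim : is_lim_seq (zeta_gap h) (zeta (1 + h) - / h)).
  { replace (zeta (1 + h) - / h) with (zeta (1 + h) - (1 - 0) / h) by (field; lra).
    apply is_lim_seq_minus'; [apply is_lim_seq_zeta_partial_sum, Hh|].
    assert (Htail : is_lim_seq (fun n => 1 - zeta_term h (S n)) (1 - 0)).
    { apply is_lim_seq_minus'; [apply is_lim_seq_const|].
      apply (is_lim_seq_incr_1 (zeta_term h)), is_lim_seq_zeta_term, Hh. }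
    exact (is_lim_seq_scal_r _ (/ h) _ Htail). }
  pose proof (zeta_term_le_inv (1 + h) (S N) ltac:(lra)).
  enough (0 <= zeta (1 + h) - / h - zeta_gap h N <= zeta_term (1 + h) (S N)) by lra.
  apply (is_lim_seq_telescoping_gap _ (fun n => zeta_term (1 + h) (S n))); [| |exact Hlim].
  - intros n; apply zeta_gap_increment, Hh.
  - intros n; apply Rlt_le, zeta_term_pos.
Qed.

Lemma harmonic_sub_zeta_partial_sum h N : 0 < h ->
  0 <= harmonic (S N) - sum_n (zeta_term (1 + h)) N
  <= h * sum_n (fun n => ln (INR n + 1)) N.
Proof.
  intros Hh; induction N as [|N IH].
  - rewrite !sum_O, zeta_term_0; simpl; rewrite !Rplus_0_l, ln_1, Rinv_1; lra.
  - change (harmonic (S (S N))) with (harmonic (S N) + / INR (S (S N))).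
    rewrite (S_INR (S N)), !sum_n_succ.
    pose proof (inv_sub_inv_Rpower_bounds (INR (S N) + 1) h
                  ltac:(pose proof (pos_INR (S N)); lra) Hh).
    change (/ Rpower (INR (S N) + 1) (1 + h)) with (zeta_term (1 + h) (S N)) in H; lra.
Qed.

Lemma Rabs_zeta_gap_sub_harmonic_gap h N : 0 < h ->
  Rabs (zeta_gap h N - harmonic_gap (S N))
  <= h * (sum_n (fun n => ln (INR n + 1)) N + ln (INR (S N) + 1) ^ 2).
Proof.
  intros Hh; set (L := ln (INR (S N) + 1)).
  assert (HL : 0 <= L) by (rewrite <- ln_1; apply ln_le; pose proof (pos_INR (S N)); lra).
  pose proof (harmonic_sub_zeta_partial_sum h N Hh).
  pose proof (one_sub_exp_neg_div_bounds h L Hh HL).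
  replace (zeta_gap h N - harmonic_gap (S N))
    with ((sum_n (zeta_term (1 + h)) N - harmonic (S N)) - ((1 - exp (- (h * L))) / h - L)).
  2: { unfold zeta_gap, harmonic_gap, zeta_term, Rpower, L; rewrite exp_Ropp; ring. }
  apply Rabs_le; nra.
Qed.

Lemma Rabs_zeta_sub_inv_sub_euler_gamma h N : 0 < h ->
  Rabs (zeta (1 + h) - / h - euler_gamma)
  <= 2 / (INR (S N) + 1) + h * (sum_n (fun n => ln (INR n + 1)) N + ln (INR (S N) + 1) ^ 2).
Proof.
  intros Hh.
  pose proof (zeta_sub_inv_sub_zeta_gap h N Hh).
  pose proof (Rabs_zeta_gap_sub_harmonic_gap h N Hh) as Hcmp; apply Rabs_le_between in Hcmp.
  pose proof (harmonic_gap_telescoping_bound _ (S N) is_lim_seq_harmonic_gap).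
  apply Rabs_le; unfold Rdiv; lra.
Qed.

Lemma zeta_sub_inv_at_right_1 :
  filterlim (fun h => zeta (1 + h) - / h) (at_right 0) (locally euler_gamma).
Proof.
  apply filterlim_locally; intros eps.
  pose proof (cond_pos eps) as He.
  destruct (INR_archimed (eps / 4) 1 ltac:(lra)) as [N HN].
  set (C := sum_n (fun n => ln (INR n + 1)) N + ln (INR (S N) + 1) ^ 2).
  assert (HC : 0 <= C).
  { unfold C; apply Rplus_le_le_0_compat; [|apply pow2_ge_0].
    rewrite sum_n_Reals; apply cond_pos_sum; intros n.
    rewrite <- ln_1; apply ln_le; pose proof (pos_INR n); lra. }
  assert (HN2 : 2 / (INR (S N) + 1) < eps / 2).
  { rewrite S_INR; pose proof (pos_INR N); apply Rlt_div_l; nra. }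
  exists (mkposreal (eps / (2 * (C + 1))) ltac:(apply Rdiv_lt_0_compat; lra)).
  intros h Hball Hh; change R in h; change (Rabs (h - 0) < eps / (2 * (C + 1))) in Hball.
  rewrite Rminus_0_r, Rabs_pos_eq in Hball by lra.
  change (Rabs (zeta (1 + h) - / h - euler_gamma) < eps).
  pose proof (Rabs_zeta_sub_inv_sub_euler_gamma h N Hh) as Hbound; fold C in Hbound.
  assert (h * (2 * (C + 1)) < eps) by (apply Rlt_div_r; lra).
  nra.
Qed.

(** * The iterated logarithm of zeta at infinity *)

Lemma ln_1p_expansion_step a c y t K :
  0 < a -> a <= t <= / 100 -> Rabs c <= 3 * a * t -> 0 <= K <= 20 ->
  Rabs (y - (a + c)) <= K * a ^ 2 * t ->
  Rabs (ln (1 + y) - (a + c - a ^ 2 / 2)) <= (K + 5) * a ^ 2 * t.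
Proof.
  intros Ha [Hat Ht] Hc HK Hy.
  apply Rabs_le_between in Hc; apply Rabs_le_between in Hy.
  assert (Hat2 : 0 <= a ^ 2 * t <= a * t / 100) by (split; nra).
  assert (HKt : K * a ^ 2 * t <= a * t / 5) by nra.
  set (w := y - a).
  assert (Hw : - (4 * a * t) <= w <= 4 * a * t) by (unfold w; lra).
  assert (Hy0 : 0 <= y <= 26 / 25 * a) by (unfold w in Hw; nra).
  pose proof (ln_1p_bounds y (proj1 Hy0)) as Htaylor.
  assert (Hsq : - (9 * a ^ 2 * t) <= y ^ 2 - a ^ 2 <= 9 * a ^ 2 * t).
  { replace (y ^ 2 - a ^ 2) with (w * (2 * a + w)) by (unfold w; ring).
    assert (0 <= 2 * a + w <= 2 * a + a / 25) by nra.
    split; nra. }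
  assert (Hcube : 0 <= y ^ 3 <= 6 / 5 * a ^ 2 * t).
  { split; [apply pow_le; lra|].
    assert (y ^ 3 <= (26 / 25 * a) ^ 3) by (apply pow_incr; lra).
    assert (a ^ 3 <= a ^ 2 * t) by (simpl; nra).
    nra. }
  apply Rabs_le; lra.
Qed.

Lemma iterated_ln_1p_expansion a b r t :
  0 < a -> a <= t <= / 100 -> 0 <= b <= a * t -> 0 <= r <= a ^ 2 * t ->
  Rabs (ln (1 + ln (1 + ln (1 + (a + b + a ^ 2 + r)))) - (a + b - a ^ 2 / 2))
  <= 16 * a ^ 2 * t.
Proof.
  intros Ha Ht Hb Hr.
  assert (Ha2 : 0 <= a ^ 2 <= a * t) by (simpl; split; nra).
  assert (Ha2t : a ^ 2 * t <= a * t) by nra.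
  assert (HL1 : Rabs (ln (1 + (a + b + a ^ 2 + r)) - (a + (b + a ^ 2 / 2)))
                <= 6 * a ^ 2 * t).
  { assert (H : Rabs (ln (1 + (a + b + a ^ 2 + r)) - (a + (b + a ^ 2 + r) - a ^ 2 / 2))
                 <= (0 + 5) * a ^ 2 * t).
    { apply ln_1p_expansion_step; [lra | lra | apply Rabs_le; lra | lra |].
      replace (a + b + a ^ 2 + r - (a + (b + a ^ 2 + r))) with 0 by ring.
      rewrite Rabs_R0; lra. }
    apply Rabs_le_between in H; apply Rabs_le; lra. }
  assert (HL2 : Rabs (ln (1 + ln (1 + (a + b + a ^ 2 + r))) - (a + b)) <= 11 * a ^ 2 * t).
  { pose proof (ln_1p_expansion_step a (b + a ^ 2 / 2) (ln (1 + (a + b + a ^ 2 + r))) t 6) as H.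
    replace (a + (b + a ^ 2 / 2) - a ^ 2 / 2) with (a + b) in H by field.
    replace (11 * a ^ 2 * t) with ((6 + 5) * a ^ 2 * t) by ring.
    apply H; [lra | lra | apply Rabs_le; lra | lra | exact HL1]. }
  replace (16 * a ^ 2 * t) with ((11 + 5) * a ^ 2 * t) by ring.
  apply ln_1p_expansion_step; [lra | lra | apply Rabs_le; lra | lra |].
  exact HL2.
Qed.

Lemma inv_expansion a b L t K :
  0 < a -> a <= t <= / 100 -> 0 <= b <= a * t -> b ^ 2 <= a ^ 3 * t -> 0 <= K <= 20 ->
  Rabs (L - (a + b - a ^ 2 / 2)) <= K * a ^ 2 * t ->
  Rabs (/ L - / a + b / a ^ 2 - 1 / 2) <= 2 * (K + 2) * t.
Proof.
  intros Ha [Hat Ht] Hb Hb2 HK HL; apply Rabs_le_between in HL.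
  set (c := b - a ^ 2 / 2); set (d := L - (a + c)).
  assert (Hat2 : 0 <= a ^ 2 * t <= a * t / 100) by (split; nra).
  assert (Ha3 : a ^ 3 <= a ^ 2 * t) by (simpl; nra).
  assert (Hc : - (a * t) <= c <= a * t) by (unfold c; nra).
  assert (Hd : - (K * a ^ 2 * t) <= d <= K * a ^ 2 * t) by (unfold d, c; lra).
  assert (HLa : a / 2 <= L) by (unfold d in Hd; nra).
  assert (Hid : (/ L - / a + b / a ^ 2 - 1 / 2) * (a ^ 2 * L) = c ^ 2 + c * d - a * d).
  { unfold d, c; field; lra. }
  assert (Hc2 : 0 <= c ^ 2 <= 5 / 4 * a ^ 3 * t).
  { split; [apply pow2_ge_0|].
    assert (c ^ 2 <= b ^ 2 + (a ^ 2 / 2) ^ 2) by (unfold c; nra).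
    assert ((a ^ 2 / 2) ^ 2 <= a ^ 3 * t / 4) by (simpl; nra).
    lra. }
  assert (Hcd : - (a ^ 3 * t / 5) <= c * d <= a ^ 3 * t / 5).
  { assert (Rabs (c * d) <= (a * t) * (K * a ^ 2 * t)).
    { rewrite Rabs_mult; apply Rmult_le_compat; try apply Rabs_pos; apply Rabs_le; lra. }
    assert (HKt : K * t <= / 5) by nra.
    assert (0 <= a ^ 3 * t) by (apply Rmult_le_pos; [apply pow_le|]; lra).
    replace (a * t * (K * a ^ 2 * t)) with (K * t * (a ^ 3 * t)) in H by ring.
    apply Rabs_le_between; nra. }
  assert (Had : - (K * a ^ 3 * t) <= a * d <= K * a ^ 3 * t).
  { replace (K * a ^ 3 * t) with (a * (K * a ^ 2 * t)) by ring; split; nra. }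
  assert (Hpos : a ^ 3 <= 2 * (a ^ 2 * L)).
  { replace (a ^ 3) with (2 * (a ^ 2 * (a / 2))) by field.
    apply Rmult_le_compat_l; [lra|]; apply Rmult_le_compat_l; [apply pow2_ge_0 | exact HLa]. }
  assert (Hnum : Rabs (c ^ 2 + c * d - a * d) <= (K + 2) * t * a ^ 3) by (apply Rabs_le; lra).
  assert (HaL : 0 < a ^ 2 * L) by (apply Rmult_lt_0_compat; [apply pow_lt|]; lra).
  apply Rmult_le_reg_r with (a ^ 2 * L); [exact HaL|].
  rewrite <- (Rabs_pos_eq (a ^ 2 * L)) at 1 by lra.
  rewrite <- Rabs_mult, Hid.
  apply Rle_trans with (1 := Hnum).
  replace (2 * (K + 2) * t * (a ^ 2 * L)) with ((K + 2) * t * (2 * (a ^ 2 * L))) by ring.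
  apply Rmult_le_compat_l; [nra | exact Hpos].
Qed.

Lemma Rpower_inv_powers_relations x : 0 <= x ->
  let a := Rpower (/ 2) x in let b := Rpower (/ 3) x in let q := Rpower (8 / 9) x in
  a <= q /\ b <= a * q /\ b ^ 2 = a ^ 3 * q.
Proof.
  intros Hx a b q; split; [|split].
  - apply Rle_Rpower_l; lra.
  - unfold a, q; rewrite Rpower_mult_distr by lra; apply Rle_Rpower_l; lra.
  - unfold a, b, q; rewrite !Rpower_pow_base, Rpower_mult_distr by lra; f_equal; field.
Qed.

Lemma Rpower_four_thirds x : Rpower (4 / 3) x = Rpower (/ 3) x / Rpower (/ 2) x ^ 2.
Proof.
  rewrite Rpower_pow_base by lra.
  apply (Rmult_eq_reg_r (Rpower ((/ 2) ^ 2) x)); [|apply Rgt_not_eq, exp_pos].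
  rewrite Rpower_mult_distr by lra; field_simplify; [|apply Rgt_not_eq, exp_pos].
  f_equal; field.
Qed.

Definition expansion_scale (x : R) : R := Rpower (8 / 9) x + 4 / (x - 1).

Lemma is_lim_expansion_scale : is_lim expansion_scale p_infty 0.
Proof.
  unfold expansion_scale; rewrite <- (Rplus_0_r 0).
  apply is_lim_plus'.
  - apply (is_lim_comp exp (fun x => x * ln (8 / 9)) p_infty 0 m_infty);
      [apply is_lim_exp_m | | exists 0; easy].
    assert (Hneg : ln (8 / 9) < 0) by (rewrite <- ln_1; apply ln_increasing; lra).
    assert (Hmult : is_Rbar_mult p_infty (ln (8 / 9)) m_infty)
      by (apply is_Rbar_mult_p_infty_neg; exact Hneg).
    rewrite <- (is_Rbar_mult_unique _ _ _ Hmult).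
    apply is_lim_mult; [apply is_lim_id | apply is_lim_const |].
    simpl; lra.
  - rewrite <- (Rmult_0_r 4).
    apply (is_lim_scal_l (fun x => / (x - 1)) 4 p_infty 0).
    replace (Finite 0) with (Rbar_inv p_infty) by reflexivity.
    apply is_lim_inv; [|discriminate].
    apply (is_lim_minus (fun x => x) (fun _ => 1) p_infty p_infty 1);
      [apply is_lim_id | apply is_lim_const | reflexivity].
Qed.

Definition iterated_log_zeta (x : R) : R := ln (ln (ln (zeta x) + 1) + 1).

Lemma iterated_log_zeta_expansion x : 1 < x -> expansion_scale x <= / 100 ->
  0 < iterated_log_zeta x <= 2 * expansion_scale x /\
  Rabs (/ iterated_log_zeta x - Rpower 2 x + Rpower (4 / 3) x - 1 / 2)
  <= 36 * expansion_scale x.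
Proof.
  intros Hx Ht; unfold expansion_scale in Ht |- *.
  set (a := Rpower (/ 2) x); set (b := Rpower (/ 3) x); set (q := Rpower (8 / 9) x) in *.
  set (t := q + 4 / (x - 1)) in *.
  assert (Ht_def : t = q + 4 / (x - 1)) by reflexivity.
  assert (Ha : 0 < a) by apply exp_pos.
  assert (Hx1 : 0 < 4 / (x - 1)) by (apply Rdiv_lt_0_compat; lra).
  destruct (Rpower_inv_powers_relations x ltac:(lra)) as [Haq [Hbq Hb2]].
  fold a b q in Haq, Hbq, Hb2.
  assert (Hat : a <= t) by lra.
  assert (Hb : 0 <= b <= a * t).
  { split; [apply Rlt_le, exp_pos|].
    apply Rle_trans with (1 := Hbq); apply Rmult_le_compat_l; lra. }
  assert (Hbt : b ^ 2 <= a ^ 3 * t)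
    by (rewrite Hb2; apply Rmult_le_compat_l; [apply pow_le|]; lra).
  destruct (zeta_expansion_at_infinity x Hx) as [Hr0 Hr1]; fold a b in Hr0, Hr1.
  set (r := zeta x - (1 + a + b + a ^ 2)) in Hr0, Hr1.
  assert (Hr : 0 <= r <= a ^ 2 * t).
  { split; [exact Hr0|]; apply Rle_trans with (1 := Hr1).
    apply Rmult_le_compat_l; [apply pow2_ge_0 | lra]. }
  assert (Hell : iterated_log_zeta x = ln (1 + ln (1 + ln (1 + (a + b + a ^ 2 + r))))).
  { replace (1 + (a + b + a ^ 2 + r)) with (zeta x) by (unfold r; ring).
    unfold iterated_log_zeta; rewrite !(Rplus_comm 1); reflexivity. }
  pose proof (iterated_ln_1p_expansion a b r t Ha (conj Hat Ht) Hb Hr) as Hexp.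
  rewrite <- Hell in Hexp.
  split.
  - apply Rabs_le_between in Hexp; nra.
  - replace (Rpower 2 x) with (/ a)
      by (unfold a; rewrite Rpower_inv_base, Rinv_inv by lra; reflexivity).
    rewrite Rpower_four_thirds; fold a b.
    replace (36 * t) with (2 * (16 + 2) * t) by ring.
    apply inv_expansion; [exact Ha | lra | exact Hb | exact Hbt | lra | exact Hexp].
Qed.

Lemma eventually_expansion_scale_small (eps : posreal) :
  Rbar_locally p_infty
    (fun x => 1 < x /\ expansion_scale x <= / 100 /\ expansion_scale x < eps).
Proof.
  assert (Hpos : 0 < Rmin (/ 100) eps)
    by (apply Rmin_glb_lt; [lra | apply cond_pos]).
  pose proof (proj2 (is_lim_spec _ _ _) is_lim_expansion_scale (mkposreal _ Hpos)) as Hlim.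
  apply (filter_imp (fun x => 1 < x /\ Rabs (expansion_scale x - 0) < Rmin (/ 100) eps)).
  - intros x [Hx Hsmall]; rewrite Rminus_0_r in Hsmall; apply Rabs_def2 in Hsmall.
    pose proof (Rmin_l (/ 100) eps); pose proof (Rmin_r (/ 100) eps); lra.
  - apply filter_and; [exists 1; easy | exact Hlim].
Qed.

Lemma iterated_log_zeta_at_right_0 :
  filterlim iterated_log_zeta (Rbar_locally p_infty) (at_right 0).
Proof.
  intros P [eps HP]; unfold filtermap.
  assert (Heps : 0 < eps / 2) by (apply Rdiv_lt_0_compat; [apply cond_pos | lra]).
  eapply filter_imp; [|exact (eventually_expansion_scale_small (mkposreal _ Heps))].
  intros x [Hx [Ht Hsmall]]; simpl in Hsmall.
  destruct (iterated_log_zeta_expansion x Hx Ht) as [[Hpos Hle] _].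
  apply HP; [|exact Hpos].
  change (Rabs (iterated_log_zeta x - 0) < eps).
  rewrite Rminus_0_r, Rabs_pos_eq; lra.
Qed.

Lemma is_lim_iterated_log_zeta_remainder :
  is_lim (fun x => / iterated_log_zeta x - Rpower 2 x + Rpower (4 / 3) x - 1 / 2) p_infty 0.
Proof.
  apply (is_lim_le_le_loc (fun x => - 36 * expansion_scale x) (fun x => 36 * expansion_scale x)).
  - eapply filter_imp; [|exact (eventually_expansion_scale_small (mkposreal 1 Rlt_0_1))].
    intros x [Hx [Ht _]].
    destruct (iterated_log_zeta_expansion x Hx Ht) as [_ Hrem].
    apply Rabs_le_between in Hrem; lra.
  - replace (Finite 0) with (Rbar_mult (- 36) 0) by (simpl; f_equal; ring).
    apply is_lim_scal_l, is_lim_expansion_scale.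
  - replace (Finite 0) with (Rbar_mult 36 0) by (simpl; f_equal; ring).
    apply is_lim_scal_l, is_lim_expansion_scale.
Qed.

Theorem mainTheorem11 :
  is_lim
    (fun x : R =>
       zeta (ln (ln (ln (zeta x) + 1) + 1) + 1)
       - Rpower 2 x + Rpower (4 / 3) x - 1 / 2)
    p_infty euler_gamma.
Proof.
  apply (is_lim_ext (fun x => (zeta (1 + iterated_log_zeta x) - / iterated_log_zeta x)
                              + (/ iterated_log_zeta x - Rpower 2 x + Rpower (4 / 3) x - 1 / 2))).
  { intros x; unfold iterated_log_zeta; rewrite (Rplus_comm 1); ring. }
  rewrite <- (Rplus_0_r euler_gamma).
  apply is_lim_plus'; [|exact is_lim_iterated_log_zeta_remainder].
  exact (filterlim_comp _ _ _ iterated_log_zeta (fun h => zeta (1 + h) - / h) _ _ _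
           iterated_log_zeta_at_right_0 zeta_sub_inv_at_right_1).
Qed.
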